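(* Let $0 < c \le 1$. With probability at least $1 - O(k^{-c}\log k)$, the pruning stage reduces $X$ to a set of at most $k^{1+c}$ elements that contains the uncorrupted maximum.
   Context: Model: $X = \{x_1,\dots,x_n\}$, $n > 2k+1$ elements, exactly $k$ corrupted; a tournament (comparison graph) says for each pair which is larger; restricted to uncorrupted elements it is acyclic, comparisons involving corrupted elements arbitrary. The uncorrupted maximum is the uncorrupted element larger than every other uncorrupted element. Pruning stage: set $t = \varnothing$; repeat $\frac{2n\log k}{k^{1+c}}$ times: pick $x_j$ uniformly at random from $X$ (independently, with replacement), and if $t = \varnothing$ or $x_j$ is larger than $t$ (by a comparison query) set $t \leftarrow x_j$. Then compare every element of $X$ with $t$ and remove from $X$ those smaller than $t$. $\log$ is the natural logarithm. *)

From mathcomp Require Import all_boot.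
From Stdlib Require Import Reals.

Set Implicit Arguments.
Unset Strict Implicit.
Unset Printing Implicit Defensive.

(* Elements of X are indexed by 'I_n.  [larger x y] means "x is larger than y"
   according to the comparison graph (tournament). *)

Definition is_tournament (n : nat) (larger : rel 'I_n) : Prop :=
  (forall x, ~~ larger x x) /\
  (forall x y, x != y -> larger x y (+) larger y x).

Definition uncorr_rel (n : nat) (larger : rel 'I_n) (K : {set 'I_n}) : rel 'I_n :=
  [rel x y | [&& x \notin K, y \notin K & larger x y]].

Definition acyclic_rel (n : nat) (e : rel 'I_n) : Prop :=
  forall x y, e x y -> ~~ connect e y x.

Definition is_uncorrupted_max (n : nat) (larger : rel 'I_n) (K : {set 'I_n})
    (u : 'I_n) : Prop :=
  u \notin K /\ (forall y, y \notin K -> y != u -> larger u y).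

Definition num_iter (n k : nat) (c : R) : nat :=
  Z.to_nat (Int_part (Rmult (Rmult 2 (INR n)) (ln (INR k)) / Rpower (INR k) (Rplus 1 c))%R).

(* One step of the tournament scan: t = None encodes t = emptyset. *)
Definition scan_step (n : nat) (larger : rel 'I_n) (t : option 'I_n) (x : 'I_n)
    : option 'I_n :=
  match t with
  | None => Some x
  | Some y => if larger x y then Some x else Some y
  end.

Definition scan (n : nat) (larger : rel 'I_n) (s : seq 'I_n) : option 'I_n :=
  foldl (scan_step larger) None s.

Definition pruned (n : nat) (larger : rel 'I_n) (s : seq 'I_n) : {set 'I_n} :=
  match scan larger s with
  | None => [set: 'I_n]
  | Some t => [set x | ~~ larger t x]
  end.

(* Probability of an event on m i.i.d. uniform samples from 'I_n:
   the uniform measure on m.-tuple 'I_n. *)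
Definition prob_samples (n m : nat) (E : pred (m.-tuple 'I_n)) : R :=
  (INR #|[set s : m.-tuple 'I_n | E s]| / INR (n ^ m))%R.

Definition success (n k : nat) (c : R) (larger : rel 'I_n) (u : 'I_n)
    (s : (num_iter n k c).-tuple 'I_n) : bool :=
  let S := pruned larger s in
  (if Rle_dec (INR #|S|) (Rpower (INR k) (Rplus 1 c)) then true else false)
  && (u \in S).

(** The pruning threshold [t] ends as the largest sample seen.  If no corrupted
  element is sampled, [t] is uncorrupted, hence not larger than the uncorrupted
  maximum, which therefore survives; and [t] dominates every sample, so at most
  the corrupted elements and the uncorrupted elements ranked above the best
  sample survive.  With [m] about [2 n ln k / k^(1+c)] samples, all of them are
  uncorrupted with probability [(1 - k/n)^m >= 1 - 2 ln k / k^c] (Bernoulli),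
  while all of them miss the [k^(1+c) - k] top-ranked uncorrupted elements with
  probability at most [(1 - k^(1+c)/n)^m <= e/k] (since [1 - y <= exp (-y)]). *)

From mathcomp Require Import all_boot.
From Stdlib Require Import Reals Lra Lia.
From Stdlib Require Znat.
From mathcomp Require Import zify.

Set Implicit Arguments.
Unset Strict Implicit.
Unset Printing Implicit Defensive.

Lemma card_tuples_in (T : finType) m (A : {set T}) :
  #|[set s : m.-tuple T | all (mem A) s]| = expn #|A| m.
Proof.
have -> : [set s : m.-tuple T | all (mem A) s] =
    (fun f : {ffun 'I_m -> T} => mktuple f) @: [set f | f \in ffun_on (mem A)].
  apply/setP => s; rewrite inE; apply/idP/imsetP.
  - move/all_tnthP => sA; exists [ffun i => tnth s i].
      by rewrite inE; apply/ffun_onP => i; rewrite ffunE; exact: sA.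
    by apply: eq_from_tnth => i; rewrite tnth_mktuple ffunE.
  - case=> f; rewrite inE => /ffun_onP fA ->; apply/all_tnthP => i.
    by rewrite tnth_mktuple; exact: fA.
rewrite card_imset ?cardsE ?card_ffun_on ?card_ord // => f g eq_fg.
by apply/ffunP => i; rewrite -(tnth_mktuple f) eq_fg tnth_mktuple.
Qed.

Section UncorruptedOrder.

Variables (n : nat) (larger : rel 'I_n) (K : {set 'I_n}).
Hypotheses (tourn : is_tournament larger)
           (acyc : acyclic_rel (uncorr_rel larger K)).

Lemma larger_irr x : ~~ larger x x.
Proof. exact: tourn.1. Qed.

Lemma larger_asym x y : larger x y -> ~~ larger y x.
Proof.
move=> xy; case: (eqVneq x y) => [exy|nxy]; first by rewrite exy larger_irr.
by move: (tourn.2 x y nxy); rewrite xy.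
Qed.

Lemma larger_total x y : x != y -> ~~ larger x y -> larger y x.
Proof. by move=> nxy; move: (tourn.2 x y nxy); case: (larger x y). Qed.

Lemma larger_trans a b c : a \notin K -> b \notin K -> c \notin K ->
  larger a b -> larger b c -> larger a c.
Proof.
move=> aK bK cK ab bc; case: (eqVneq a c) => [eac|nac].
  by move: (larger_asym bc); rewrite -eac ab.
have e_ab : uncorr_rel larger K a b by rewrite /uncorr_rel /= aK bK ab.
apply: contraNT (acyc e_ab) => /(larger_total nac) ca.
by apply: (connect_trans (y := c)); apply: connect1; rewrite /uncorr_rel /= ?aK ?bK ?cK ?bc.
Qed.

Definition larger_eq (x y : 'I_n) : bool := (x == y) || larger x y.

Lemma larger_eq_trans a b c : a \notin K -> b \notin K -> c \notin K ->
  larger_eq a b -> larger_eq b c -> larger_eq a c.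
Proof.
move=> aK bK cK /orP[/eqP->|ab] // /orP[/eqP<-|bc]; rewrite /larger_eq ?ab ?orbT //.
by rewrite (larger_trans aK bK cK ab bc) orbT.
Qed.

Lemma scan_step_dominates t x :
  exists2 t', scan_step larger (Some t) x = Some t' &
    [&& (t' == t) || (t' == x), larger_eq t' t & larger_eq t' x].
Proof.
rewrite /=; case: ifP => xt.
  by exists x; rewrite // /larger_eq !eqxx xt !orbT.
exists t; rewrite // /larger_eq !eqxx /=.
by case: (eqVneq t x) => //= ntx; apply: larger_total; rewrite 1?eq_sym ?xt.
Qed.

Lemma foldl_scan_step_dominates s t0 : t0 \notin K -> all [predC K] s ->
  exists2 t, foldl (scan_step larger) (Some t0) s = Some t &
    [&& t \notin K, larger_eq t t0 & all (larger_eq t) s].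
Proof.
elim: s t0 => [|x s IHs] t0 t0K; first by exists t0; rewrite // t0K /larger_eq eqxx.
case/andP=> xK sK; have [t1 step_t1 /and3P[t1tx t1t0 t1x]] := scan_step_dominates t0 x.
have t1K : t1 \notin K by case/orP: t1tx => /eqP->.
have [t fold_t /and3P[tK tt1 ts]] := IHs t1 t1K sK.
exists t; first by rewrite -fold_t -step_t1.
by rewrite /= tK ts (larger_eq_trans tK t1K t0K) ?(larger_eq_trans tK t1K xK).
Qed.

Lemma scan_dominates s : s != [::] -> all [predC K] s ->
  exists2 t, scan larger s = Some t & (t \notin K) && all (larger_eq t) s.
Proof.
case: s => [|x s] // _ /= /andP[xK sK].
have [t st /and3P[tK tx ts]] := foldl_scan_step_dominates xK sK.
by exists t; rewrite /scan /= ?st ?tK ?tx.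
Qed.

(* For uncorrupted [x], the position of [x] counted from the top among the
   uncorrupted elements, [x] itself included. *)
Definition uncorr_rank (x : 'I_n) : nat := #|[set y | y \notin K & ~~ larger x y]|.

Lemma uncorr_rank_le_card x : uncorr_rank x <= #|~: K|.
Proof. by apply/subset_leq_card/subsetP => y; rewrite !inE => /andP[]. Qed.

Lemma uncorr_rank_proper a b : a \notin K -> b \notin K -> larger a b ->
  [set y | y \notin K & ~~ larger a y] \proper [set y | y \notin K & ~~ larger b y].
Proof.
move=> aK bK ab; apply/properP; split.
  apply/subsetP => y; rewrite !inE => /andP[yK nay]; rewrite yK /=.
  by apply: contra nay; exact: larger_trans.
by exists b; rewrite !inE bK ?larger_irr ?ab.
Qed.

Lemma uncorr_rank_lt a b : a \notin K -> b \notin K -> larger a b ->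
  uncorr_rank a < uncorr_rank b.
Proof. by move=> aK bK ab; exact/proper_card/uncorr_rank_proper. Qed.

Lemma uncorr_rank_le a b : a \notin K -> b \notin K -> larger_eq a b ->
  uncorr_rank a <= uncorr_rank b.
Proof. by move=> aK bK /orP[/eqP->//|ab]; exact/ltnW/uncorr_rank_lt. Qed.

Lemma uncorr_rank_inj : {in ~: K &, injective uncorr_rank}.
Proof.
move=> a b; rewrite !inE => aK bK eq_ab; apply/eqP; apply: contraT => nab.
case ab: (larger a b); first by move: (uncorr_rank_lt aK bK ab); rewrite eq_ab ltnn.
by move: (uncorr_rank_lt bK aK (larger_total nab (negbT ab))); rewrite eq_ab ltnn.
Qed.

Lemma card_high_uncorr_rank j :
  #|[set x | x \notin K & j < uncorr_rank x]| <= #|~: K| - j.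
Proof.
rewrite -(size_iota j.+1 (#|~: K| - j)) cardE.
rewrite -(size_map uncorr_rank); apply: uniq_leq_size.
  rewrite map_inj_in_uniq ?enum_uniq // => a b; rewrite !mem_enum !inE.
  by move=> /andP[aK _] /andP[bK _]; apply: uncorr_rank_inj; rewrite inE.
move=> r /mapP[x]; rewrite mem_enum inE => /andP[_ jx] ->.
by rewrite mem_iota; have := uncorr_rank_le_card x; lia.
Qed.

Lemma card_not_smaller t : #|[set y | ~~ larger t y]| <= uncorr_rank t + #|K|.
Proof.
apply: leq_trans (leq_card_setU _ K); apply/subset_leq_card/subsetP => y.
by rewrite !inE => ->; case: (y \in K).
Qed.

Lemma uncorrupted_max_not_smaller u t :
  is_uncorrupted_max larger K u -> t \notin K -> ~~ larger t u.
Proof.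
case=> uK umax tK; case: (eqVneq t u) => [->|ntu]; first exact: larger_irr.
by apply: larger_asym; apply: umax; rewrite // eq_sym.
Qed.

End UncorruptedOrder.

Section PruningSuccess.

Variables (n k : nat) (c : R) (larger : rel 'I_n) (K : {set 'I_n}) (u : 'I_n).
Hypotheses (tourn : is_tournament larger)
           (acyc : acyclic_rel (uncorr_rel larger K))
           (umax : is_uncorrupted_max larger K u) (cardK : #|K| = k).

Local Notation m := (num_iter n k c).
Local Notation rank := (uncorr_rank larger K).

Lemma success_of_low_rank_sample (s : m.-tuple 'I_n) x :
  all [predC K] s -> x \in s ->
  (INR (rank x + k) <= Rpower (INR k) (1 + c))%R -> success larger u s.
Proof.
move=> sK xs x_low; have xK : x \notin K := allP sK x xs.
have s_nil : tval s != [::] by apply: contraTneq xs => s0; rewrite memtE s0.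
have [t scan_t /andP[tK ts]] := scan_dominates tourn acyc s_nil sK.
rewrite /success /pruned scan_t inE (uncorrupted_max_not_smaller tourn umax tK) andbT.
case: Rle_dec => // -[]; apply: Rle_trans x_low; apply/le_INR/leP.
rewrite -cardK; apply: leq_trans (card_not_smaller larger K t) _.
by rewrite leq_add2r (uncorr_rank_le tourn acyc tK xK) ?(allP ts x xs).
Qed.

Lemma card_success_ge j : (INR (j + k) <= Rpower (INR k) (1 + c))%R ->
  expn (n - k) m <= #|[set s : m.-tuple 'I_n | success larger u s]| + expn (n - k - j) m.
Proof.
move=> j_low; set B := [set x | x \notin K & j < rank x].
have cardKC : #|~: K| = n - k by rewrite cardsCs setCK card_ord cardK.
have cardB : expn #|B| m <= expn (n - k - j) m.
  have B_le : #|B| <= n - k - j by rewrite -cardKC card_high_uncorr_rank.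
  by case: (posnP m) => [->|m_gt0]; rewrite ?expn0 ?leq_exp2r.
apply: leq_trans (leq_add (leqnn _) cardB); rewrite -cardKC -!card_tuples_in.
apply: leq_trans (leq_card_setU _ _); apply/subset_leq_card.
apply/subsetP => s; rewrite !inE => sKC; have sK : all [predC K] s.
  by move: sKC; apply: sub_all => x; rewrite /= inE.
case sB: (all (mem B) s); rewrite ?orbT // orbF.
have [x xs] := allPn (negbT sB); have xK : x \notin K := allP sK x xs.
rewrite /= inE xK /= -leqNgt => x_low.
apply: success_of_low_rank_sample sK xs _; apply: Rle_trans j_low.
by apply/le_INR/leP; rewrite leq_add2r.
Qed.

End PruningSuccess.

Local Open Scope R_scope.

Lemma INR_expn a m : INR (expn a m) = INR a ^ m.
Proof. by elim: m => [|m IHm]; rewrite ?expn0 // expnS mult_INR IHm. Qed.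

Lemma prob_samples_ge n m (E : pred (m.-tuple 'I_n)) a b : (0 < n)%nat ->
  (expn a m <= #|[set s : m.-tuple 'I_n | E s]| + expn b m)%nat ->
  (INR a / INR n) ^ m - (INR b / INR n) ^ m <= prob_samples E.
Proof.
move=> n_gt0 /leP/le_INR; rewrite plus_INR !INR_expn /prob_samples pow_INR => le_ab.
have n_pow_gt0 : 0 < INR n ^ m by apply/pow_lt/lt_0_INR/ltP.
rewrite /Rdiv !Rpow_mult_distr -Rmult_minus_distr_r pow_inv.
by apply: Rmult_le_compat_r; [left; exact: Rinv_0_lt_compat | lra].
Qed.

Lemma prob_samples_all n m (E : pred (m.-tuple 'I_n)) : (0 < n)%nat ->
  (forall s, E s) -> prob_samples E = 1.
Proof.
move=> n_gt0 allE; rewrite /prob_samples.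
have -> : [set s : m.-tuple 'I_n | E s] = setT by apply/setP => s; rewrite !inE allE.
rewrite cardsT card_tuple card_ord pow_INR -INR_expn /Rdiv Rinv_r //.
by apply/not_0_INR/eqP; rewrite -lt0n expn_gt0 n_gt0.
Qed.

Lemma prob_success_nil n k c (larger : rel 'I_n) u : (0 < n)%nat -> num_iter n k c = 0%nat ->
  INR n <= Rpower (INR k) (1 + c) -> prob_samples (@success n k c larger u) = 1.
Proof.
move=> n_gt0 m0 n_le; apply: prob_samples_all => // s.
have s_nil : tval s = [::] by apply/nilP; rewrite /nilp size_tuple m0.
rewrite /success /pruned /scan s_nil /= cardsT card_ord in_setT andbT.
by case: Rle_dec.
Qed.

Definition floorn (x : R) : nat := Z.to_nat (Int_part x).

Lemma floorn_bounds x : 0 <= x -> INR (floorn x) <= x < INR (floorn x) + 1.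
Proof.
move=> x_ge0; have [lb ub] := base_Int_part x.
have Int_ge0 : (0 <= Int_part x)%Z by apply/Z.lt_succ_r/lt_IZR; rewrite succ_IZR; lra.
by rewrite /floorn INR_IZR_INZ Znat.Z2Nat.id //; lra.
Qed.

Lemma Bernoulli_ineq y m : y <= 1 -> 1 - INR m * y <= (1 - y) ^ m.
Proof.
move=> y_le1; elim: m => [|m IHm]; first by rewrite /=; lra.
have pow_ge0 : 0 <= (1 - y) ^ m by apply: pow_le; lra.
rewrite S_INR /=; have := pos_INR m; nra.
Qed.

Lemma pow_one_sub_le_exp y m : 0 <= 1 - y -> (1 - y) ^ m <= exp (- (INR m * y)).
Proof.
move=> y_le1; apply: Rle_trans (pow_incr _ (exp (- y)) m _) _.
  by split => //; have := exp_ineq1_le (- y); lra.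
rewrite -Rpower_pow /Rpower ?ln_exp; last exact: exp_pos.
by right; f_equal; ring.
Qed.

Lemma one_sub_le_pow_ratio n l m x : (l <= n)%nat -> (0 < n)%nat -> INR m <= x ->
  1 - x * INR l / INR n <= (INR (n - l) / INR n) ^ m.
Proof.
move=> /leP l_le_n /ltP/lt_0_INR n_gt0 m_le_x; set y := INR l / INR n.
have ly : y * INR n = INR l by rewrite /y; field; lra.
have y01 : 0 <= y <= 1 by have := pos_INR l; have := le_INR _ _ l_le_n; nra.
have -> : INR (n - l) / INR n = 1 - y by rewrite minus_INR // /y; field; lra.
have -> : x * INR l / INR n = x * y by rewrite /y; field; lra.
by apply: Rle_trans (Bernoulli_ineq m (proj2 y01)); nra.
Qed.

Lemma pow_ratio_le_exp n l m b : (0 < m)%nat -> (0 < n)%nat ->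
  ((l < n)%nat -> INR n * b <= INR m * INR l) -> (INR (n - l) / INR n) ^ m <= exp (- b).
Proof.
move=> m_gt0 n_gt0 ml_ge; have n_gt0R : 0 < INR n by apply/lt_0_INR/ltP.
case: (ltnP l n) => [l_lt_n | n_le_l]; last first.
  have -> : (n - l = 0)%nat by apply/eqP; rewrite subn_eq0.
  by rewrite /Rdiv Rmult_0_l pow_i; [left; exact: exp_pos | exact/ltP].
set y := INR l / INR n; have ly : y * INR n = INR l by rewrite /y; field; lra.
have y_le1 : y <= 1 by have := le_INR _ _ (leP (ltnW l_lt_n)); nra.
have -> : INR (n - l) / INR n = 1 - y.
  by rewrite minus_INR /y; [field; lra | apply/leP/ltnW].
apply: Rle_trans (pow_one_sub_le_exp m _) _; first lra.
have b_le : b <= INR m * y by have := ml_ge l_lt_n; nra.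
case: (Rle_lt_or_eq_dec _ _ b_le) => [b_lt|->]; last by right.
by left; apply: exp_increasing; lra.
Qed.

Lemma half_lt_ln k : (2 <= k)%nat -> / 2 < ln (INR k).
Proof.
move=> k_ge2; have : 2 <= INR k by apply/(le_INR 2)/leP.
case/Rle_lt_or_eq_dec => [k_gt2|<-]; last exact: ln_lt_2.
by apply: Rlt_trans ln_lt_2 (ln_increasing _ _ _ k_gt2); lra.
Qed.

Lemma Rpower_bounds x y : 1 <= x -> 0 <= y <= 1 -> 1 <= Rpower x y <= x.
Proof.
move=> x_ge1 y01; have x_gt0 : 0 < x by lra.
split; first by rewrite -(Rpower_O x) //; apply: Rle_Rpower; lra.
by rewrite -{2}(Rpower_1 x) //; apply: Rle_Rpower; lra.
Qed.

Lemma exp_one_sub_ln_le x : 0 < x -> exp (1 - ln x) <= 3 / x.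
Proof.
move=> x_gt0; rewrite /Rminus exp_plus exp_Ropp exp_ln //.
by apply: Rmult_le_compat_r; [left; exact: Rinv_0_lt_compat | exact: exp_le_3].
Qed.

Section PruningParameters.

Variables (n k : nat) (c : R).
Hypotheses (n_gt0 : (0 < n)%nat) (k_ge2 : (2 <= k)%nat) (c_ge0 : 0 <= c).

Local Notation P := (Rpower (INR k) (1 + c)).
Local Notation m := (num_iter n k c).

Let k_ge2R : 2 <= INR k. Proof. exact/(le_INR 2)/leP. Qed.
Let n_gt0R : 0 < INR n. Proof. exact/lt_0_INR/ltP. Qed.
Let ln_k_gt : / 2 < ln (INR k). Proof. exact: half_lt_ln. Qed.

Lemma k_le_Rpower : INR k <= P.
Proof.
rewrite -{1}(Rpower_1 (INR k)); last lra.
by apply: Rle_Rpower; lra.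
Qed.

Let P_gt0 : 0 < P. Proof. exact: exp_pos. Qed.

Let iter_ratio_ge0 : 0 <= 2 * INR n * ln (INR k) / P.
Proof. by apply: Rmult_le_pos; [nra | left; exact: Rinv_0_lt_compat]. Qed.

Lemma num_iter_le : INR m <= 2 * INR n * ln (INR k) / P.
Proof. exact: (floorn_bounds iter_ratio_ge0).1. Qed.

Lemma rank_threshold_exists : exists j, INR (j + k) <= P /\ P - 1 < INR (k + j).
Proof.
have P_ge_k : 0 <= P - INR k by have := k_le_Rpower; lra.
have [j_le j_gt] := floorn_bounds P_ge_k.
by exists (floorn (P - INR k)); rewrite !plus_INR; lra.
Qed.

Lemma num_iter_eq0 : m = 0%nat -> INR n <= P.
Proof.
move=> m0; have [_] := floorn_bounds iter_ratio_ge0; rewrite -[floorn _]/m m0 /=.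
set X := _ / P => X_lt1; have XP : X * P = 2 * INR n * ln (INR k) by rewrite /X; field; lra.
nra.
Qed.

Lemma num_iter_mul_ge l : P - 1 < INR l -> (l < n)%nat ->
  INR n * (ln (INR k) - 1) <= INR m * INR l.
Proof.
move=> l_gt l_lt_n; have l_lt_nR : INR l < INR n by exact/lt_INR/ltP.
have [_] := floorn_bounds iter_ratio_ge0; rewrite -[floorn _]/m.
set X := _ / P => m_gt; have XP : X * P = 2 * INR n * ln (INR k) by rewrite /X; field; lra.
have P_ge2 : 2 <= P by have := k_le_Rpower; lra.
have X_ge0 : 0 <= X := iter_ratio_ge0.
have X_le : X <= INR n * ln (INR k) by nra.
have m_l : (X - 1) * INR l <= INR m * INR l by have := pos_INR l; nra.
have X_l : X * (P - 1) <= X * INR l by nra.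
nra.
Qed.

Lemma one_sub_le_pow_num_iter : (k <= n)%nat ->
  1 - 2 * ln (INR k) / Rpower (INR k) c <= (INR (n - k) / INR n) ^ m.
Proof.
move=> k_le_n; apply: Rle_trans (one_sub_le_pow_ratio k_le_n n_gt0 num_iter_le); right.
have kc_gt0 : 0 < Rpower (INR k) c by exact: exp_pos.
by rewrite Rpower_plus Rpower_1; [field; split; lra | lra].
Qed.

Lemma pow_num_iter_le l : (0 < m)%nat -> P - 1 < INR l ->
  (INR (n - l) / INR n) ^ m <= 3 / INR k.
Proof.
move=> m_gt0 l_gt; apply: Rle_trans (exp_one_sub_ln_le _); last lra.
rewrite -(Ropp_minus_distr (ln _)); apply: pow_ratio_le_exp => //.
exact: num_iter_mul_ge.
Qed.

End PruningParameters.

Local Close Scope R_scope.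

Theorem mainTheorem11 :
  exists C : R, (0 < C)%R /\
  forall (c : R) (n k : nat) (larger : rel 'I_n) (K : {set 'I_n}) (u : 'I_n),
    (0 < c <= 1)%R ->
    (2 * k + 1 < n)%N ->
    (2 <= k)%N ->
    #|K| = k ->
    is_tournament larger ->
    acyclic_rel (uncorr_rel larger K) ->
    is_uncorrupted_max larger K u ->
    (prob_samples (@success n k c larger u)
       >= 1 - C * Rpower (INR k) (- c) * ln (INR k))%R.
Proof.
exists 8%R; split => [|c n k larger K u [c_gt0 c_le1] n_gt k_ge2 cardK tourn acyc umax].
  by lra.
have n_gt0 : (0 < n)%N by lia.
have k_le_n : (k <= n)%N by lia.
Local Open Scope R_scope.
have c_ge0 : 0 <= c by lra.
have a_gt := half_lt_ln k_ge2; set a := ln (INR k) in a_gt *.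
have [kc_ge1 kc_le_k] : 1 <= Rpower (INR k) c <= INR k.
  by apply: Rpower_bounds; [apply/(le_INR 1)/leP; lia | lra].
rewrite Rpower_Ropp; set kc := Rpower (INR k) c in kc_ge1 kc_le_k *.
have kc_inv_gt0 : 0 < / kc by apply: Rinv_0_lt_compat; lra.
case: (posnP (num_iter n k c)) => [m0|m_gt0].
  by rewrite (prob_success_nil larger u n_gt0 m0 (num_iter_eq0 n_gt0 k_ge2 m0)); nra.
have [j [j_low kj_gt]] := rank_threshold_exists k_ge2 c_ge0.
have lower := prob_samples_ge n_gt0 (card_success_ge tourn acyc umax cardK j_low).
have first := one_sub_le_pow_num_iter c n_gt0 k_ge2 k_le_n.
have second := pow_num_iter_le n_gt0 k_ge2 c_ge0 m_gt0 kj_gt; rewrite subnDA in second.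
have k_inv_le : 3 / INR k <= 3 / kc.
  by apply: Rmult_le_compat_l; [lra | apply: Rinv_le_contravar; lra].
have three_le : 3 * / kc <= 6 * a * / kc by nra.
rewrite /Rdiv -/a -/kc in first second lower k_inv_le; lra.
Qed.
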